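(* Let $n\ge1$ and let $\mathcal B$ be a finite abstract $\mathfrak q_n$-crystal. Then its character $\mathrm{ch}(\mathcal B)=\sum_{b\in\mathcal B}x_1^{\mathrm{wt}(b)_1}\cdots x_n^{\mathrm{wt}(b)_n}$ lies in $\Gamma_n$.
   Context: An abstract $\mathfrak{gl}_n$-crystal is a set $\mathcal B$ with $\mathrm{wt}:\mathcal B\to\mathbb{Z}_{\ge0}^n$ and $e_i,f_i:\mathcal B\to\mathcal B\sqcup\{0\}$ ($i\in[n-1]$) such that $e_i(b)=c\iff f_i(c)=b$, in which case $\mathrm{wt}(c)=\mathrm{wt}(b)+\mathbf e_i-\mathbf e_{i+1}$, and $\varepsilon_i(b)=\max\{k:e_i^k(b)\ne0\}$, $\varphi_i(b)=\max\{k:f_i^k(b)\ne0\}$ are finite with $\varphi_i(b)-\varepsilon_i(b)=\mathrm{wt}(b)_i-\mathrm{wt}(b)_{i+1}$. For $n\ge2$ an abstract $\mathfrak q_n$-crystal is an abstract $\mathfrak{gl}_n$-crystal with maps $e_{\bar1},f_{\bar1}:\mathcal B\to\mathcal B\sqcup\{0\}$ such that: $e_{\bar1}(b)=c\iff f_{\bar1}(c)=b$, in which case $\mathrm{wt}(b)=\mathrm{wt}(c)+\mathbf e_2-\mathbf e_1$ and $\varepsilon_i(b)=\varepsilon_i(c)$, $\varphi_i(b)=\varphi_i(c)$ for $3\le i\le n-1$; $e_{\bar1},f_{\bar1}$ commute with $e_i,f_i$ for $3\le i\le n-1$ (all operators send $0$ to $0$); and, with $\varepsilon_{\bar1}(b)=\max\{k:e_{\bar1}^k(b)\ne0\}$,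 $\varphi_{\bar1}(b)=\max\{k:f_{\bar1}^k(b)\neq0\}$, one has $\varepsilon_{\bar1}(b)+\varphi_{\bar1}(b)\le1$ with equality if $\mathrm{wt}(b)_1\ne0$ or $\mathrm{wt}(b)_2\ne0$. An abstract $\mathfrak q_1$-crystal is any set with a weight map to $\mathbb{Z}_{\ge0}$. $\Lambda_n$ is the ring of symmetric polynomials in $\mathbb{Z}[x_1,\dots,x_n]$; for $n\ge2$, $\Gamma_n$ is the subring of $f\in\Lambda_n$ with $f(x_1,-x_1,x_3,\dots,x_n)\in\mathbb{Z}[x_3,\dots,x_n]$, and $\Gamma_1=\Lambda_1$. *)

From HB Require Import structures.
From mathcomp Require Import all_boot all_order all_algebra.
From mathcomp Require Import mpoly.
Set Implicit Arguments. Unset Strict Implicit. Unset Printing Implicit Defensive.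
Import GRing.Theory.
Local Open Scope ring_scope.

(* Conventions: coordinates and crystal indices are 0-indexed.
   The paper's operator e_i (i in [n-1]) is [e (i-1)], acting on coordinates
   i-1 and i (0-indexed); the paper's e_{\bar 1} is [ebar]. *)

Section Crystals.
Variables (n : nat) (B : finType).

Definition wtc (wt : B -> n.-tuple nat) (b : B) (j : nat) : nat := nth 0%N (wt b) j.

(* g^k(b), with 0 represented by None *)
Definition oiter (g : B -> option B) (k : nat) (b : B) : option B :=
  iter k (obind g) (Some b).

Definition is_max_iter (g : B -> option B) (b : B) (k : nat) : Prop :=
  oiter g k b <> None /\ oiter g k.+1 b = None.

Definition is_gl_crystal (wt : B -> n.-tuple nat) (e f : nat -> B -> option B) : Prop :=
  forall i : nat, (i.+1 < n)%N ->
    [/\ (forall b c, e i b = Some c <-> f i c = Some b),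
        (forall b c, e i b = Some c -> forall j : nat, (j < n)%N ->
            (wtc wt c j)%:Z = (wtc wt b j)%:Z + ((j == i) : nat)%:Z
                                 - ((j == i.+1) : nat)%:Z)
      & (forall b, exists keps kphi : nat,
            [/\ is_max_iter (e i) b keps, is_max_iter (f i) b kphi
              & kphi%:Z - keps%:Z = (wtc wt b i)%:Z - (wtc wt b i.+1)%:Z])].

Definition is_q_crystal (wt : B -> n.-tuple nat) (e f : nat -> B -> option B)
    (ebar fbar : B -> option B) : Prop :=
  is_gl_crystal wt e f /\
  ((2 <= n)%N ->
   [/\ (forall b c, ebar b = Some c <-> fbar c = Some b),
       (forall b c, ebar b = Some c ->
          (forall j : nat, (j < n)%N ->
            (wtc wt b j)%:Z = (wtc wt c j)%:Z + ((j == 1%N) : nat)%:Z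
                                 - ((j == 0%N) : nat)%:Z) /\
          (forall i : nat, (2 <= i)%N -> (i.+1 < n)%N ->
             (forall k, is_max_iter (e i) b k <-> is_max_iter (e i) c k) /\
             (forall k, is_max_iter (f i) b k <-> is_max_iter (f i) c k))),
       (forall i : nat, (2 <= i)%N -> (i.+1 < n)%N -> forall b,
          [/\ obind ebar (e i b) = obind (e i) (ebar b),
              obind ebar (f i b) = obind (f i) (ebar b),
              obind fbar (e i b) = obind (e i) (fbar b)
            & obind fbar (f i b) = obind (f i) (fbar b)])
     & (forall b, exists keps kphi : nat,
          [/\ is_max_iter ebar b keps, is_max_iter fbar b kphi,
              (keps + kphi <= 1)%N
            & (wtc wt b 0 != 0%N) || (wtc wt b 1 != 0%N) -> (keps + kphi = 1)%N])]).

Definition character (wt : B -> n.-tuple nat) : {mpoly int[n]} :=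
  \sum_(b : B) \prod_(j < n) 'X_j ^+ (tnth (wt b) j).

End Crystals.

(* substitution x_1 -> x_1, x_2 -> -x_1, x_j -> x_j (j >= 3); 0-indexed *)
Definition gamma_subst (n : nat) : n.-tuple {mpoly int[n]} :=
  [tuple if val j == 1%N
         then - 'X_(Ordinal (leq_ltn_trans (leq0n j) (ltn_ord j)))
         else 'X_j | j < n].

Definition Lambda (n : nat) (p : {mpoly int[n]}) : Prop := p \is symmetric.

Definition Gamma (n : nat) (p : {mpoly int[n]}) : Prop :=
  Lambda p /\
  ((2 <= n)%N -> forall m, m \in msupp (p \mPo gamma_subst n) ->
      forall j : 'I_n, (val j < 2)%N -> m j = 0%N).

(* For each i in [n-1], reflecting every i-string (Kashiwara's action of the simple
   reflection s_i) is a permutation of B exchanging the weight coordinates i and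
   i+1; since adjacent transpositions generate S_n, the character is symmetric.
   Under x_2 |-> -x_1 a monomial x^m becomes (-1)^(m_2) x_1^(m_1+m_2) x_3^(m_3)...,
   and the involution sending b to e_{bar 1} b or f_{bar 1} b (b itself if both
   vanish) reverses this sign off its fixed points, while its fixed points have
   wt_1 = wt_2 = 0. So only monomials free of x_1 and x_2 survive. *)

From HB Require Import structures.
From mathcomp Require Import all_boot all_order all_algebra.
From mathcomp Require Import mpoly.
From mathcomp Require Import fingroup perm zify.
Set Implicit Arguments. Unset Strict Implicit. Unset Printing Implicit Defensive.
Import GRing.Theory.
Local Open Scope ring_scope.

Section PartialIteration.
Variable B : finType.
Implicit Types (g h : B -> option B) (b c : B).

Lemma iter_obind_None g k : iter k (obind g) None = None.
Proof. by elim: k => //= k ->. Qed.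

Lemma oiterSr g k b : oiter g k.+1 b = obind (oiter g k) (g b).
Proof. by rewrite /oiter iterSr /=; case: (g b) => //=; rewrite iter_obind_None. Qed.

Lemma oiter_le g k l b : (l <= k)%N -> oiter g k b <> None -> oiter g l b <> None.
Proof.
move=> /subnK <- gk gl; apply: gk.
by rewrite /oiter iterD -/(oiter g l b) gl iter_obind_None.
Qed.

Lemma max_iter_le g b k l : is_max_iter g b k -> (l <= k)%N -> oiter g l b <> None.
Proof. by move=> [gk _] lk; apply: oiter_le lk gk. Qed.

Lemma max_iter_eq0 g b k : is_max_iter g b k -> (k == 0%N) = ~~ isSome (g b).
Proof.
case: k => [|k] [gk gk1]; first by move: gk1 => /= ->.
by case gb: (g b) => //; case: gk; rewrite oiterSr gb.
Qed.

Lemma oiter_inv g h : (forall x y, g x = Some y <-> h y = Some x) ->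
  forall k b c, oiter g k b = Some c -> oiter h k c = Some b.
Proof.
move=> gh; elim=> [|k IH] b c; first by move=> [->].
rewrite oiterSr; case gb: (g b) => [b'|] //= /IH -> /=.
exact/gh.
Qed.

Lemma oiter_inj g h : (forall x y, g x = Some y <-> h y = Some x) ->
  forall k b b' c, oiter g k b = Some c -> oiter g k b' = Some c -> b = b'.
Proof.
move=> gh k b b' c /(oiter_inv gh) + /(oiter_inv gh); congruence.
Qed.

Lemma oiter_shift (w : B -> int) (d : int) g :
  (forall b c, g b = Some c -> w c = w b + d) ->
  forall k b c, oiter g k b = Some c -> w c = w b + d *+ k.
Proof.
move=> gw; elim=> [|k IH] b c; first by move=> [<-]; rewrite mulr0n addr0.
rewrite -[oiter g k.+1 b]/(obind g (oiter g k b)).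
case E: (oiter g k b) => [c'|] //= /gw ->.
by rewrite (IH _ _ E) mulrSr addrA.
Qed.

End PartialIteration.

Section AdjacentTranspositions.
Variables (n : nat) (P : 'S_n -> Prop).
Hypotheses (P1 : P 1%g) (PM : forall s t, P s -> P t -> P (s * t)%g).
Hypothesis Padj : forall i j : 'I_n, j = i.+1 :> nat -> P (tperm i j).

Lemma tperm_adjacent_ind d (i j : 'I_n) : j = (i + d.+1)%N :> nat -> P (tperm i j).
Proof.
elim: d j => [|d IH] j ij; first by apply: Padj; rewrite ij addn1.
have kn : (i + d.+1 < n)%N by have := ltn_ord j; lia.
pose k := Ordinal kn.
have [ki kj] : k != i /\ j != i by rewrite -!val_eqE /= ij; split; lia.
have -> : tperm i j = (tperm k j * (tperm i k * tperm k j))%g.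
  rewrite -{1}(tpermV k j) -/(conjg _ _) tpermJ tpermL tpermD //.
by apply/PM/PM; [apply: Padj | apply: IH | apply: Padj]; rewrite /= ?ij; lia.
Qed.

Lemma perm_adjacent_ind s : P s.
Proof.
have Ptperm (i j : 'I_n) : P (tperm i j).
  case: (ltngtP i j) => ij.
  - by apply: (@tperm_adjacent_ind (j - i).-1); lia.
  - by rewrite tpermC; apply: (@tperm_adjacent_ind (i - j).-1); lia.
  - by rewrite (val_inj ij) tperm1.
have [ts -> _] := prod_tpermP s.
by elim: ts => [|t ts IH]; rewrite ?big_nil ?big_cons //; apply: PM.
Qed.

End AdjacentTranspositions.

Lemma issym_adjacent (R : nzRingType) n (p : {mpoly R[n]}) :
  (forall i j : 'I_n, j = i.+1 :> nat -> msym (tperm i j) p = p) ->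
  p \is symmetric.
Proof.
move=> adj; apply/issymP; apply: perm_adjacent_ind => [|s t ps pt|//].
  exact: msym1m.
by rewrite msymMm ps pt.
Qed.

Lemma msym_sum_mpolyX (R : nzRingType) n (I : finType) (m : I -> 'X_{1..n})
    (s : 'S_n) (sigma : I -> I) :
  injective sigma -> (forall b, m (sigma b) = [multinom m b (s j) | j < n]) ->
  msym s^-1 (\sum_b 'X_[m b]) = \sum_b 'X_[m b] :> {mpoly R[n]}.
Proof.
move=> sigma_inj msigma; rewrite raddf_sum [RHS](reindex_inj sigma_inj) /=.
by apply: eq_bigr => b _; rewrite msymX invgK msigma.
Qed.

Definition mwt n (B : finType) (wt : B -> n.-tuple nat) (b : B) : 'X_{1..n} :=
  [multinom wtc wt b j | j < n].

Lemma characterE n (B : finType) (wt : B -> n.-tuple nat) :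
  character wt = \sum_b 'X_[mwt wt b].
Proof.
apply: eq_bigr => b _; rewrite mpolyXE_id; apply: eq_bigr => j _.
by rewrite mnmE /wtc (tnth_nth 0%N).
Qed.

Section StringReflection.
Variables (n : nat) (B : finType) (wt : B -> n.-tuple nat) (e f : B -> option B).
Variables (i i' : 'I_n).
Hypothesis ii' : i' = i.+1 :> nat.
Hypothesis ef_inv : forall b c, e b = Some c <-> f c = Some b.
Hypothesis e_wt : forall b c, e b = Some c -> forall j : nat, (j < n)%N ->
  (wtc wt c j)%:Z = (wtc wt b j)%:Z + ((j == i) : nat)%:Z - ((j == i.+1) : nat)%:Z.
Hypothesis string_lengths : forall b, exists keps kphi : nat,
  [/\ is_max_iter e b keps, is_max_iter f b kphi
    & kphi%:Z - keps%:Z = (wtc wt b i)%:Z - (wtc wt b i.+1)%:Z].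

Let shift (j : nat) : int := ((j == i) : nat)%:Z - ((j == i.+1) : nat)%:Z.

Lemma oiter_e_wt k b c j : (j < n)%N -> oiter e k b = Some c ->
  (wtc wt c j)%:Z = (wtc wt b j)%:Z + shift j *+ k.
Proof.
move=> jn; apply: (oiter_shift (w := fun b => (wtc wt b j)%:Z)) => x y /e_wt.
by move/(_ j jn) => ->; rewrite addrA.
Qed.

Lemma oiter_f_wt k b c j : (j < n)%N -> oiter f k b = Some c ->
  (wtc wt c j)%:Z = (wtc wt b j)%:Z + (- shift j) *+ k.
Proof.
move=> jn; apply: (oiter_shift (w := fun b => (wtc wt b j)%:Z)) => x y.
by move/ef_inv/e_wt/(_ j jn) => ->; rewrite /shift; lia.
Qed.

Definition string_reflection (b : B) : B :=
  if (wtc wt b i.+1 <= wtc wt b i)%N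
  then odflt b (oiter f (wtc wt b i - wtc wt b i.+1) b)
  else odflt b (oiter e (wtc wt b i.+1 - wtc wt b i) b).

Lemma string_reflectionE b :
  if (wtc wt b i.+1 <= wtc wt b i)%N
  then oiter f (wtc wt b i - wtc wt b i.+1) b = Some (string_reflection b)
  else oiter e (wtc wt b i.+1 - wtc wt b i) b = Some (string_reflection b).
Proof.
have [keps [kphi [eps phi len]]] := string_lengths b.
rewrite /string_reflection; case: leqP => le.
  have : oiter f (wtc wt b i - wtc wt b i.+1) b <> None.
    by apply: (max_iter_le phi); lia.
  by case: (oiter f _ b) => [c _|/(_ erefl)].
have : oiter e (wtc wt b i.+1 - wtc wt b i) b <> None.
  by apply: (max_iter_le eps); lia.
by case: (oiter e _ b) => [c _|/(_ erefl)].
Qed.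

Lemma mwt_string_reflection b :
  mwt wt (string_reflection b) = [multinom mwt wt b (tperm i i' j) | j < n].
Proof.
apply/mnmP => j; rewrite !mnmE.
have shift_wt : (wtc wt (string_reflection b) j)%:Z =
    (wtc wt b j)%:Z - shift j * ((wtc wt b i)%:Z - (wtc wt b i.+1)%:Z).
  have := string_reflectionE b; case: ifP => le.
    by move/(oiter_f_wt (ltn_ord j)) => ->; rewrite /shift; lia.
  by move/(oiter_e_wt (ltn_ord j)) => ->; rewrite /shift; lia.
move: shift_wt; rewrite /shift.
case: tpermP => [->|->|/eqP ji /eqP ji']; rewrite ?ii'; try lia.
by rewrite -!val_eqE /= ?ii' in ji ji'; lia.
Qed.

Lemma string_reflection_inj : injective string_reflection.
Proof.
move=> b1 b2 eq12.
have mwt12 : mwt wt b1 = mwt wt b2.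
  apply/mnmP => j; have := congr1 (fun m : 'X_{1..n} => m (tperm i i' j))
    (congr1 (mwt wt) eq12).
  by rewrite !mwt_string_reflection !mnmE tpermK.
have wt12 j : (j < n)%N -> wtc wt b1 j = wtc wt b2 j.
  move=> jn; have := congr1 (fun m : 'X_{1..n} => m (Ordinal jn)) mwt12.
  by rewrite !mnmE.
have := string_reflectionE b1; have := string_reflectionE b2.
have fe_inv x y : f x = Some y <-> e y = Some x by rewrite ef_inv.
rewrite -eq12 -ii' !wt12 //; case: ifP => _ h2 h1.
  exact: oiter_inj fe_inv _ _ _ _ h1 h2.
exact: oiter_inj ef_inv _ _ _ _ h1 h2.
Qed.

End StringReflection.

Lemma character_symmetric n (B : finType) (wt : B -> n.-tuple nat) e f :
  is_gl_crystal wt e f -> character wt \is symmetric.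
Proof.
move=> gl; rewrite characterE; apply: issym_adjacent => i i' ii'.
have i1n : (i.+1 < n)%N by rewrite -ii'.
have [ef_inv e_wt strings] := gl i i1n.
rewrite -[tperm i i']tpermV.
exact: msym_sum_mpolyX (string_reflection_inj ii' ef_inv e_wt strings)
                       (mwt_string_reflection ii' ef_inv e_wt strings).
Qed.

Section GammaSubstitution.
Variables (n : nat) (n2 : (1 < n)%N).
Let i0 : 'I_n := Ordinal (ltnW n2).
Let i1 : 'I_n := Ordinal n2.

Definition mfold01 (m : 'X_{1..n}) : 'X_{1..n} :=
  [multinom if j == i0 then (m i0 + m i1)%N else if j == i1 then 0%N else m j | j < n].

Lemma comp_gamma_mpolyX m :
  'X_[m] \mPo gamma_subst n = (-1) ^+ m i1 * 'X_[mfold01 m].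
Proof.
have i10 : i1 != i0 by [].
rewrite comp_mpolyX !mpolyXE_id (bigD1 i1) // (bigD1 i0) //=.
rewrite [in RHS](bigD1 i0) // [in RHS](bigD1 i1) //= !mnmE eqxx (negPf i10) eqxx.
rewrite (eq_bigl (fun j => (j != i0) && (j != i1))) => [|j]; last exact: andbC.
rewrite !tnth_mktuple /=.
have -> : Ordinal (leq_ltn_trans (leq0n 1) (ltn_ord i1)) = i0 by apply: val_inj.
rewrite (eq_bigr (fun j => 'X_j ^+ mfold01 m j)) => [|j /andP [ji0 ji1]].
  rewrite expr0 mul1r exprD [in LHS]exprNn -mulrA.
  by congr (_ * _); rewrite mulrCA mulrA.
rewrite tnth_mktuple mnmE (negPf ji0) (negPf ji1).
by rewrite -val_eqE /= in ji1; rewrite (negPf ji1).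
Qed.

Lemma comp_gamma_mpolyX_id (m : 'X_{1..n}) :
  m i1 = 0%N -> 'X_[m] \mPo gamma_subst n = 'X_[m].
Proof.
move=> m1; rewrite comp_gamma_mpolyX m1 expr0 mul1r; congr 'X_[_].
apply/mnmP => j; rewrite mnmE m1 addn0.
by case: eqP => [->|_] //; case: eqP => [->|].
Qed.

End GammaSubstitution.

Lemma sum_sign_reversing_involution (I : finType) (V : zmodType) (tau : I -> I)
    (F : I -> V) :
  involutive tau -> (forall i, tau i != i -> F (tau i) = - F i) ->
  \sum_i F i = \sum_(i | tau i == i) F i.
Proof.
move=> tauK Ftau; rewrite (bigID (fun i => tau i == i)) /=.
suff -> : \sum_(i | tau i != i) F i = 0 by rewrite addr0.
(* Split the non-fixed points by whether i precedes tau i; tau swaps the halves. *)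
pose r (i : I) : nat := val (enum_rank i).
rewrite (bigID (fun i => r i < r (tau i))%N) /=.
rewrite [X in _ + X](reindex_inj (inv_inj tauK)) /=.
rewrite [X in _ + X](eq_bigl (fun i => (tau i != i) && (r i < r (tau i))%N)) => [|i].
  by rewrite -big_split; apply: big1 => i /andP [ti _] /=; rewrite Ftau // addrN.
rewrite tauK eq_sym; have [//|ti /=] := eqVneq (tau i) i.
have : r i != r (tau i) by rewrite /r val_eqE (inj_eq enum_rank_inj) eq_sym.
lia.
Qed.

Section OddStrings.
Variables (n : nat) (B : finType) (wt : B -> n.-tuple nat) (ebar fbar : B -> option B).
Hypothesis n2 : (1 < n)%N.
Hypothesis ebar_inv : forall b c, ebar b = Some c <-> fbar c = Some b.
Hypothesis ebar_wt : forall b c, ebar b = Some c -> forall j : nat, (j < n)%N ->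
  (wtc wt b j)%:Z = (wtc wt c j)%:Z + ((j == 1%N) : nat)%:Z - ((j == 0%N) : nat)%:Z.
Hypothesis odd_string_lengths : forall b, exists keps kphi : nat,
  [/\ is_max_iter ebar b keps, is_max_iter fbar b kphi, (keps + kphi <= 1)%N
    & (wtc wt b 0 != 0%N) || (wtc wt b 1 != 0%N) -> (keps + kphi = 1)%N].

Let i1 : 'I_n := Ordinal n2.

Lemma fbar_Some_ebar_None b c : fbar b = Some c -> ebar b = None.
Proof.
have [keps [kphi [eps phi le _]]] := odd_string_lengths b.
move=> fb; move: (max_iter_eq0 eps) (max_iter_eq0 phi); rewrite fb.
by case: (ebar b) => //=; lia.
Qed.

Lemma ebar_fbar_None_wt b : ebar b = None -> fbar b = None ->
  wtc wt b 0 = 0%N /\ wtc wt b 1 = 0%N.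
Proof.
move=> eN fN; have [keps [kphi [eps phi _ eq1]]] := odd_string_lengths b.
move: (max_iter_eq0 eps) (max_iter_eq0 phi) eq1.
rewrite eN fN /= => /eqP-> /eqP-> eq1.
have : ~~ ((wtc wt b 0 != 0%N) || (wtc wt b 1 != 0%N)) by apply/negP => /eq1.
by rewrite negb_or !negbK => /andP [/eqP -> /eqP ->].
Qed.

Lemma ebar_neq b c : ebar b = Some c -> c != b.
Proof.
move=> bc; apply/eqP => cb; have := ebar_wt bc (ltnW n2).
by rewrite cb; lia.
Qed.

Lemma comp_gamma_ebar b c : ebar b = Some c ->
  'X_[mwt wt b] \mPo gamma_subst n = - ('X_[mwt wt c] \mPo gamma_subst n).
Proof.
move=> bc; rewrite !(comp_gamma_mpolyX n2).
have wtbc := ebar_wt bc.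
have -> : mwt wt b i1 = (mwt wt c i1).+1 by rewrite !mnmE /=; have := wtbc 1%N n2; lia.
rewrite exprS mulN1r mulNr; congr (- (_ * 'X_[_])).
apply/mnmP => j; rewrite !mnmE /=.
case: eqP => [_|/eqP j0]; first by have := wtbc 0%N (ltnW n2); have := wtbc 1%N n2; lia.
case: eqP => // /eqP j1; rewrite -!val_eqE /= in j0 j1.
by have := wtbc j (ltn_ord j); lia.
Qed.

Definition odd_flip (b : B) : B := if ebar b is Some c then c else odflt b (fbar b).

Lemma odd_flipK : involutive odd_flip.
Proof.
move=> b; rewrite /odd_flip; case eb: (ebar b) => [c|].
  have fc := proj1 (ebar_inv _ _) eb.
  by rewrite (fbar_Some_ebar_None fc) fc.
case fb: (fbar b) => [c|] /=; last by rewrite eb fb.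
by rewrite (proj2 (ebar_inv _ _) fb).
Qed.

Lemma odd_flip_fixed b : odd_flip b = b -> wtc wt b 0 = 0%N /\ wtc wt b 1 = 0%N.
Proof.
rewrite /odd_flip; case eb: (ebar b) => [c|].
  by move=> cb; move: (ebar_neq eb); rewrite cb eqxx.
case fb: (fbar b) => [c|] /=; last by move=> _; apply: ebar_fbar_None_wt.
by move=> cb; move: (ebar_neq (proj2 (ebar_inv _ _) fb)); rewrite cb eqxx.
Qed.

Lemma comp_gamma_odd_flip b : odd_flip b != b ->
  'X_[mwt wt (odd_flip b)] \mPo gamma_subst n = - ('X_[mwt wt b] \mPo gamma_subst n).
Proof.
rewrite /odd_flip; case eb: (ebar b) => [c|].
  by rewrite (comp_gamma_ebar eb) opprK.
case fb: (fbar b) => [c|] /=; last by rewrite eqxx.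
by rewrite (comp_gamma_ebar (proj2 (ebar_inv _ _) fb)).
Qed.

Lemma msupp_comp_gamma_character m (j : 'I_n) :
  m \in msupp (character wt \mPo gamma_subst n) -> (j < 2)%N -> m j = 0%N.
Proof.
rewrite characterE raddf_sum.
rewrite (sum_sign_reversing_involution odd_flipK comp_gamma_odd_flip).
rewrite (eq_bigr (fun b => 'X_[mwt wt b])) => [|b /eqP/odd_flip_fixed [_ wt1]].
  move/msupp_sum_le/flattenP => [s /mapP [b]].
  rewrite mem_filter => /andP [/eqP/odd_flip_fixed [wt0 wt1] _] ->.
  rewrite msuppX inE => /eqP ->; rewrite mnmE.
  by case: j => [[|[|j]] ?] //=.
by apply: comp_gamma_mpolyX_id; rewrite mnmE.
Qed.

End OddStrings.

Theorem proposition2p5 (n : nat) (B : finType) (wt : B -> n.-tuple nat)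
    (e f : nat -> B -> option B) (ebar fbar : B -> option B) :
  (1 <= n)%N -> is_q_crystal wt e f ebar fbar -> Gamma (character wt).
Proof.
move=> _ [gl qc]; split; first exact: character_symmetric gl.
move=> n2 m mP j j2; have [ebar_inv ebar_wt _ strings] := qc n2.
have ebar_wt' b c (bc : ebar b = Some c) := proj1 (ebar_wt b c bc).
exact: msupp_comp_gamma_character n2 ebar_inv ebar_wt' strings m j mP j2.
Qed.
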